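(* Let $n\ge 3$ and let $C$ be a chain with vertices $1,\dots,n$ and positive weights $w_1,\dots,w_{n-1}$ (edge $\{i,i+1\}$ has weight $w_i$). Let $\lambda(C)=d^D(1,n)$, where $D$ is the real symmetric $n\times n$ matrix with $D_{i,i+1}=D_{i+1,i}=w_i^{-1}$ for $i=1,\dots,n-1$ and all other entries $0$. Let $f(b)=\sum_{i=1}^{n-1}w_ib_i$ for $b\in\mathbb{R}^{n-1}$ and define $$L_1(C)=\max\{f(b) : |b_i|^2+|b_{i+1}|^2\le 1\ \forall\,1\le i\le n-2\},\qquad L_2(C)=\max\Big\{f(b) : \sum_{i=1}^{n-1}|b_i|\le\frac n2\Big\},$$ $$R_1(C)=\max\{f(b) : |b_i|+|b_{i+1}|\le 1\ \forall\,1\le i\le n-2\},\qquad R_2(C)=\max\Big\{f(b) : |b_i|\le\frac{1}{2\cos\frac{\pi}{n+1}}\ \forall\,1\le i\le n-1\Big\}.$$ Then $$\max(R_1(C),R_2(C))\le\lambda(C)\le\min(L_1(C),L_2(C)),$$ and moreover $R_2(C)=\dfrac{\ell(C)}{2\cos\frac{\pi}{n+1}}$ and $L_2(C)=\dfrac n2\max_{1\le i\le n-1}w_i$, where $\ell(C)=\sum_{i=1}^{n-1}w_i$.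
   Context: For a self-adjoint $n\times n$ matrix $M$, $d^M(i,j)=\sup\{|a(i)-a(j)| : a\in\mathbb{C}^n,\ \|[M,\pi(a)]\|\le 1\}$, where $\pi(a)=\mathrm{diag}(a(1),\dots,a(n))$ and $\|\cdot\|$ is the operator norm. $\lambda(C)$ is called the noncommutative length of $C$ and $\ell(C)$ its geodesic length. *)

From HB Require Import structures.
From mathcomp Require Import all_boot all_order all_algebra.
From mathcomp Require Import all_classical all_reals all_analysis.
From mathcomp Require Import complex.
Set Implicit Arguments. Unset Strict Implicit. Unset Printing Implicit Defensive.
Import Order.TTheory GRing.Theory Num.Theory.
Local Open Scope ring_scope.
Local Open Scope classical_set_scope.

Section Defs.
Variable R : realType.

Definition cmod (z : R[i]) : R := Num.sqrt (complex.Re z ^+ 2 + complex.Im z ^+ 2).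

Definition vnorm (n : nat) (v : 'cV[R[i]]_n) : R :=
  Num.sqrt (\sum_(k < n) cmod (v k 0) ^+ 2).

Definition opnorm (n : nat) (A : 'M[R[i]]_n) : R :=
  sup [set vnorm (A *m v) | v in [set v : 'cV[R[i]]_n | vnorm v <= 1]].

Definition piDiag (n : nat) (a : 'I_n -> R[i]) : 'M[R[i]]_n :=
  diag_mx (\row_k a k).

Definition commutator (n : nat) (M X : 'M[R[i]]_n) : 'M[R[i]]_n :=
  M *m X - X *m M.

(* d^M(i,j) = sup { |a(i) - a(j)| : a in C^n, ||[M, pi(a)]|| <= 1 },
   an extended real (the supremum may a priori be +oo) *)
Definition dist_mx (n : nat) (M : 'M[R[i]]_n) (i j : 'I_n) : \bar R :=
  ereal_sup [set (cmod (a i - a j))%:E |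
             a in [set a : 'I_n -> R[i] | opnorm (commutator M (piDiag a)) <= 1]].

(* Chain with vertices 0..n-1 (paper: 1..n); edge {k,k+1} has weight w k
   (paper: w_{k+1}), for k < n-1. *)
Definition chainD (n : nat) (w : nat -> R) : 'M[R]_n :=
  \matrix_(i < n, j < n)
    if j == i.+1 :> nat then (w i)^-1
    else if i == j.+1 :> nat then (w j)^-1 else 0.

Definition cplx_mx (n : nat) (M : 'M[R]_n) : 'M[R[i]]_n :=
  map_mx (fun x => x%:C%C) M.

Definition nclength (n : nat) (w : nat -> R) : \bar R :=
  match n with
  | 0 => 0%E
  | m.+1 => dist_mx (cplx_mx (chainD m.+1 w)) ord0 ord_max
  end.

Definition fobj (n : nat) (w : nat -> R) (b : 'I_n.-1 -> R) : R :=
  \sum_(k < n.-1) w k * b k.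

(* max of f over a constraint set (the sets are compact; max = sup) *)
Definition maxf (n : nat) (w : nat -> R) (P : ('I_n.-1 -> R) -> Prop) : R :=
  sup [set fobj w b | b in P].

Definition L1 (n : nat) (w : nat -> R) : R :=
  maxf w (fun b => forall k l : 'I_n.-1, val l = (val k).+1 ->
                     `|b k| ^+ 2 + `|b l| ^+ 2 <= 1).
Definition L2 (n : nat) (w : nat -> R) : R :=
  maxf w (fun b => \sum_(k < n.-1) `|b k| <= n%:R / 2).
Definition R1 (n : nat) (w : nat -> R) : R :=
  maxf w (fun b => forall k l : 'I_n.-1, val l = (val k).+1 ->
                     `|b k| + `|b l| <= 1).
Definition R2 (n : nat) (w : nat -> R) : R :=
  maxf w (fun b => forall k : 'I_n.-1, `|b k| <= (2 * cos (pi / n.+1%:R))^-1).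

Definition geolength (n : nat) (w : nat -> R) : R := \sum_(k < n.-1) w k.

End Defs.

From HB Require Import structures.
From mathcomp Require Import all_boot all_order all_algebra.
From mathcomp Require Import all_classical all_reals all_analysis.
From mathcomp Require Import complex.
From mathcomp Require Import ring lra.
Import Order.TTheory GRing.Theory Num.Theory.
Set Implicit Arguments. Unset Strict Implicit. Unset Printing Implicit Defensive.
Local Open Scope ring_scope.

(* Write c_k = (a_(k+1) - a_k) / w_k.  The commutator [D, pi(a)] is the tridiagonal
   matrix with c_k above and -c_k below the diagonal, and |a_1 - a_n| <= sum_k w_k |c_k|.
   Upper bounds: column k+1 of the commutator contains c_k and -c_(k+1), which gives the
   constraint of L1; pairing the commutator with two unimodular vectors (scaled by
   1/sqrt n) whose phases align every c_k gives (2/n) sum_k |c_k| <= 1, the constraint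
   of L2.
   Lower bounds: the potential a_j = sum_(k<j) w_k |b_k| has slopes |b_k|, so its
   commutator is dominated entrywise by the symmetric tridiagonal matrix B with
   off-diagonal entries |b_k|.  By the Schur test its norm is at most 1 as soon as
   B u <= u for some positive u: take u = 1 for R1, and for R2 the Perron vector
   u_i = sin((i+1) pi/(n+1)) of the path, for which
   B u <= (u_(i+1) + u_(i-1)) / (2 cos(pi/(n+1))) = u_i.
   The values of R2 and L2 are attained at a constant vector and at a multiple of the
   coordinate vector of a heaviest edge. *)

Section ComplexModulus.
Variable R : realType.
Implicit Types (x y : R[i]) (r : R).

Lemma cmodE x : `|x| = (cmod x)%:C%C.
Proof. by rewrite normc_def. Qed.

Lemma cmod_ge0 x : 0 <= cmod x.
Proof. by rewrite -lecR -cmodE normr_ge0. Qed.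

Lemma cmodR r : cmod r%:C%C = `|r|.
Proof. by rewrite /cmod /= expr0n /= addr0 sqrtr_sqr. Qed.

Lemma cmod0 : cmod 0 = 0 :> R.
Proof. by rewrite (cmodR 0) normr0. Qed.

Lemma cmod1 : cmod 1 = 1 :> R.
Proof. by rewrite (cmodR 1) normr1. Qed.

Lemma cmodN x : cmod (- x) = cmod x.
Proof. by apply: complexI; rewrite -!cmodE normrN. Qed.

Lemma cmodM x y : cmod (x * y) = cmod x * cmod y.
Proof. by apply: complexI; rewrite rmorphM /= -!cmodE normrM. Qed.

Lemma cmodV x : cmod x^-1 = (cmod x)^-1.
Proof. by apply: complexI; rewrite fmorphV /= -!cmodE normfV. Qed.

Lemma cmod_eq0 x : (cmod x == 0) = (x == 0).
Proof. by rewrite -(inj_eq (@complexI R)) -cmodE rmorph0 normr_eq0. Qed.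

Lemma cmod_sum (I : finType) (F : I -> R[i]) :
  cmod (\sum_i F i) <= \sum_i cmod (F i).
Proof.
rewrite -lecR rmorph_sum -cmodE (le_trans (ler_norm_sum _ _ _)) //.
by rewrite ler_sum // => i _; rewrite cmodE.
Qed.

Definition conj_phase x : R[i] := if x == 0 then 1 else `|x| / x.

Lemma cmod_conj_phase x : cmod (conj_phase x) = 1.
Proof.
rewrite /conj_phase; have [_|x0] := eqVneq x 0; first exact: cmod1.
by rewrite cmodM cmodV cmodE cmodR ger0_norm ?cmod_ge0 // divff // cmod_eq0.
Qed.

Lemma mul_conj_phase x : x * conj_phase x = (cmod x)%:C%C.
Proof.
rewrite /conj_phase; have [->|x0] := eqVneq x 0; first by rewrite mul0r cmod0.
by rewrite mulrC divfK // cmodE.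
Qed.

End ComplexModulus.

Lemma mulr_le_amgm (R : realFieldType) (a b x y : R) : 0 < a -> 0 < b ->
  x * y <= (x ^+ 2 * (b / a) + y ^+ 2 * (a / b)) / 2.
Proof.
move=> a0 b0.
have -> : (x ^+ 2 * (b / a) + y ^+ 2 * (a / b)) / 2 =
          x * y + (x * b - y * a) ^+ 2 / (2 * (a * b)).
  by field; rewrite ?lt0r_neq0 ?mulr_gt0.
by rewrite lerDl divr_ge0 ?sqr_ge0 // ltW // !mulr_gt0.
Qed.

Section OperatorNorm.
Variables (R : realType) (n : nat).
Implicit Types (A : 'M[R[i]]_n) (v : 'cV[R[i]]_n).

Lemma vnorm_ge0 v : 0 <= vnorm v.
Proof. exact: sqrtr_ge0. Qed.

Lemma vnorm_sqr v : vnorm v ^+ 2 = \sum_k cmod (v k 0) ^+ 2.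
Proof. by rewrite sqr_sqrtr // sumr_ge0 // => k _; rewrite sqr_ge0. Qed.

Lemma cmod_le_vnorm v k : cmod (v k 0) <= vnorm v.
Proof.
rewrite -ler_sqr ?nnegrE ?cmod_ge0 ?vnorm_ge0 // vnorm_sqr (bigD1 k) //= lerDl.
by rewrite sumr_ge0 // => j _; rewrite sqr_ge0.
Qed.

Lemma vnorm_mulmx_le_opnorm A v : vnorm v <= 1 -> vnorm (A *m v) <= opnorm A.
Proof.
move=> v1; apply: ub_le_sup; last by exists v.
exists (Num.sqrt (\sum_i (\sum_j cmod (A i j)) ^+ 2)) => _ [u u1 <-].
rewrite ler_sqrt ?sumr_ge0 // => [|i _]; last exact: sqr_ge0.
apply: ler_sum => i _.
rewrite ler_sqr ?nnegrE ?cmod_ge0 ?sumr_ge0 // => [|j _]; last exact: cmod_ge0.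
rewrite mxE; apply: le_trans (cmod_sum _) (ler_sum _ _) => j _.
by rewrite cmodM ler_piMr ?cmod_ge0 // (le_trans (cmod_le_vnorm _ _)).
Qed.

Lemma opnorm_le A c : (forall v, vnorm v <= 1 -> vnorm (A *m v) <= c) -> opnorm A <= c.
Proof.
move=> Ac; apply: ge_sup => [|_ [v v1 <-]]; last exact: Ac.
exists (vnorm (A *m 0)), 0 => //=.
by rewrite /vnorm big1 ?sqrtr0 ?ler01 // => k _; rewrite mxE cmod0 expr0n.
Qed.

Lemma vnorm_col_le_opnorm A j : vnorm (col j A) <= opnorm A.
Proof.
rewrite colE vnorm_mulmx_le_opnorm // /vnorm (bigD1 j) //= big1 => [|k kj].
  by rewrite mxE !eqxx cmod1 expr1n addr0 sqrtr1.
by rewrite mxE (negbTE kj) cmod0 expr0n.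
Qed.

Lemma cmod_dot_le (x z : 'cV[R[i]]_n) :
  cmod (\sum_i x i 0 * z i 0) <= (vnorm x ^+ 2 + vnorm z ^+ 2) / 2.
Proof.
rewrite !vnorm_sqr -big_split mulr_suml /=.
apply: le_trans (cmod_sum _) (ler_sum _ _) => i _.
by rewrite cmodM (le_trans (mulr_le_amgm _ _ ltr01 ltr01)) // !divr1 !mulr1.
Qed.

Lemma vnorm_unimodular (p : 'I_n -> R[i]) :
  (0 < n)%N -> (forall i, cmod (p i) = 1) ->
  vnorm (\col_i (((Num.sqrt n%:R)^-1)%:C%C * p i)) = 1.
Proof.
move=> n_gt0 p1; have n_neq0 : (n%:R : R) != 0 by rewrite pnatr_eq0 -lt0n.
rewrite /vnorm (eq_bigr (fun=> n%:R^-1)) => [|i _]; last first.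
  by rewrite mxE cmodM p1 mulr1 cmodR ger0_norm ?invr_ge0 ?sqrtr_ge0 // exprVn sqr_sqrtr ?ler0n.
by rewrite sumr_const card_ord -[_ *+ n]mulr_natr mulVf // sqrtr1.
Qed.

End OperatorNorm.

Lemma schur_test (R : realType) n (A : 'M[R[i]]_n) (B : 'M[R]_n) (u : 'I_n -> R) :
  (forall i, 0 < u i) -> (forall i j, cmod (A i j) <= B i j) ->
  (forall i, \sum_j B i j * u j <= u i) -> (forall j, \sum_i B i j * u i <= u j) ->
  forall v, vnorm (A *m v) <= vnorm v.
Proof.
move=> u_gt0 AB rowB colB v.
have u_neq0 i : u i != 0 by rewrite lt0r_neq0.
rewrite -ler_sqr ?nnegrE ?vnorm_ge0 // !vnorm_sqr.
set q := fun i => cmod ((A *m v) i 0); set p := fun j => cmod (v j 0).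
rewrite -/(\sum_i q i ^+ 2) -/(\sum_j p j ^+ 2).
have B_ge0 i j : 0 <= B i j := le_trans (cmod_ge0 _) (AB i j).
have q_le i : q i <= \sum_j B i j * p j.
  rewrite /q mxE (le_trans (cmod_sum _)) // ler_sum // => j _.
  by rewrite cmodM ler_wpM2r ?cmod_ge0.
pose E i j := B i j * (q i ^+ 2 * (u j / u i)).
pose F i j := B i j * (p j ^+ 2 * (u i / u j)).
have sumE : \sum_i \sum_j E i j <= \sum_i q i ^+ 2.
  apply: ler_sum => i _; rewrite (eq_bigr (fun j => q i ^+ 2 / u i * (B i j * u j))).
    rewrite -mulr_sumr (le_trans (ler_wpM2l _ (rowB i))) ?divfK //.
    by rewrite divr_ge0 ?sqr_ge0 ?ltW.
  by move=> j _; rewrite /E; field.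
have sumF : \sum_i \sum_j F i j <= \sum_j p j ^+ 2.
  rewrite exchange_big; apply: ler_sum => j _.
  rewrite (eq_bigr (fun i => p j ^+ 2 / u j * (B i j * u i))).
    rewrite -mulr_sumr (le_trans (ler_wpM2l _ (colB j))) ?divfK //.
    by rewrite divr_ge0 ?sqr_ge0 ?ltW.
  by move=> i _; rewrite /F; field.
have : \sum_i q i ^+ 2 <= (\sum_i \sum_j E i j + \sum_i \sum_j F i j) / 2.
  rewrite -big_split mulr_suml; apply: ler_sum => i _.
  rewrite -big_split mulr_suml expr2 (le_trans (ler_wpM2l (cmod_ge0 _) (q_le i))) //.
  rewrite mulr_sumr ler_sum // => j _; rewrite mulrCA.
  have -> : (E i j + F i j) / 2 =
            B i j * ((q i ^+ 2 * (u j / u i) + p j ^+ 2 * (u i / u j)) / 2).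
    by rewrite /E /F; ring.
  by apply: ler_wpM2l => //; apply: mulr_le_amgm.
lra.
Qed.

Definition tridiag_mx (T : zmodType) n (up low : nat -> T) : 'M[T]_n :=
  \matrix_(i < n, j < n)
    if j == i.+1 :> nat then up i else if i == j.+1 :> nat then low j else 0.

Lemma tridiag_mx_sym (T : zmodType) n (d : nat -> T) i j :
  tridiag_mx n d d i j = tridiag_mx n d d j i.
Proof.
rewrite !mxE; have [->|//] := eqVneq (j : nat) i.+1.
by rewrite (ltn_eqF (ltnW (ltnSn _))).
Qed.

Section TridiagonalSums.
Variables (T : pzRingType) (n : nat) (up low : nat -> T).

Lemma tridiag_mx_row (y : nat -> T) (i : 'I_n) :
  \sum_j tridiag_mx n up low i j * y j =
  (if (i.+1 < n)%N then up i * y i.+1 else 0) +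
  (if i : nat is k.+1 then low k * y k else 0).
Proof.
rewrite (eq_bigr (fun j : 'I_n => (if j == i.+1 :> nat then up i * y j else 0) +
                                   (if i == j.+1 :> nat then low j * y j else 0))).
  rewrite big_split -!big_mkcond (big_ord1_eq _ (fun j => up i * y j)) /=; congr (_ + _).
  case: i => [[|k] //= ik]; first by rewrite big_pred0.
  rewrite (eq_bigl (fun j : 'I_n => j == k :> nat)) => [|j]; last by rewrite eqSS eq_sym.
  by rewrite (big_ord1_eq _ (fun j => low j * y j)) ltnW.
move=> j _; rewrite mxE; have [->|] := eqVneq (j : nat) i.+1.
  by rewrite (ltn_eqF (ltnW (ltnSn _))) addr0.
by move=> _; rewrite add0r; case: eqP; rewrite ?mul0r.
Qed.

Lemma tridiag_mx_form (x y : nat -> T) :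
  \sum_(i < n) x i * \sum_(j < n) tridiag_mx n up low i j * y j =
  \sum_(k < n.-1) (x k * up k * y k.+1 + x k.+1 * low k * y k).
Proof.
under eq_bigr do rewrite tridiag_mx_row mulrDr.
case: n => [|N]; first by rewrite !big_ord0.
rewrite big_split /= big_ord_recr big_ord_recl /= ltnn !mulr0 add0r addr0 -big_split /=.
by apply: eq_bigr => k _; rewrite ltnS ltn_ord !mulrA.
Qed.

End TridiagonalSums.

Section PhasePair.
Variable R : realType.
Implicit Types c : nat -> R[i].

(* Unimodular (p_k, q_k) with p_k c_k q_(k+1) = |c_k| = p_(k+1) (- c_k) q_k. *)
Fixpoint phase_pair c (k : nat) : R[i] * R[i] :=
  if k is k'.+1 then
    (- conj_phase (c k') / (phase_pair c k').2, conj_phase (c k') / (phase_pair c k').1)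
  else (1, 1).

Lemma cmod_phase_pair c k : cmod (phase_pair c k).1 = 1 /\ cmod (phase_pair c k).2 = 1.
Proof.
elim: k => [|k [p1 q1]] /=; first by rewrite cmod1.
by rewrite !(cmodM, cmodN, cmodV) cmod_conj_phase p1 q1 invr1 mulr1.
Qed.

Lemma phase_pair_neq0 c k : (phase_pair c k).1 != 0 /\ (phase_pair c k).2 != 0.
Proof.
have [p1 q1] := cmod_phase_pair c k.
by rewrite -!cmod_eq0 p1 q1 oner_eq0.
Qed.

Lemma phase_pair_tridiag_form n c (s : R[i]) :
  \sum_(i < n) s * (phase_pair c i).1 *
    \sum_(j < n) tridiag_mx n c (fun k => - c k) i j * (s * (phase_pair c j).2) =
  (2 * s ^+ 2) * \sum_(k < n.-1) (cmod (c k))%:C%C.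
Proof.
rewrite (tridiag_mx_form _ _ _ (fun i => s * (phase_pair c i).1)
                               (fun j => s * (phase_pair c j).2)).
rewrite mulr_sumr; apply: eq_bigr => k _ /=.
have [p0 q0] := phase_pair_neq0 c k.
rewrite -mul_conj_phase; field.
by rewrite p0 q0.
Qed.

End PhasePair.

Lemma commutator_piDiagE (R : realType) n (M : 'M[R[i]]_n) (a : 'I_n -> R[i]) i j :
  commutator M (piDiag a) i j = M i j * (a j - a i).
Proof. by rewrite /commutator /piDiag mul_mx_diag mul_diag_mx !mxE mulrBr [a i * _]mulrC. Qed.

Section Chain.
Variables (R : realType) (m : nat) (w : nat -> R).
Hypothesis w_gt0 : forall k, (k < m)%N -> 0 < w k.
Local Notation n := m.+1.

Definition chain_commutator (a : 'I_n -> R[i]) : 'M[R[i]]_n :=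
  commutator (cplx_mx (chainD n w)) (piDiag a).

Definition chain_slope (a : 'I_n -> R[i]) (k : nat) : R[i] :=
  (a (inord k.+1) - a (inord k)) / (w k)%:C%C.

Lemma chain_commutatorE a :
  chain_commutator a = tridiag_mx n (chain_slope a) (fun k => - chain_slope a k).
Proof.
apply/matrixP => i j; rewrite commutator_piDiagE !mxE /chain_slope.
have [ji|_] := eqVneq (j : nat) i.+1; first by rewrite -ji !inord_val fmorphV mulrC.
have [ij|_] := eqVneq (i : nat) j.+1; last by rewrite rmorph0 mul0r.
by rewrite -ij !inord_val fmorphV mulrC -mulNr opprB.
Qed.

Lemma chain_telescope a :
  cmod (a ord0 - a ord_max) <= \sum_(k < m) w k * cmod (chain_slope a k).
Proof.
have -> : a ord0 - a ord_max = - \sum_(k < m) (a (inord k.+1) - a (inord k)).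
  rewrite -(big_mkord xpredT (fun k => a (inord k.+1) - a (inord k))) telescope_sumr //.
  by rewrite opprB; congr (a _ - a _); apply: val_inj; rewrite /= inordK.
rewrite cmodN (le_trans (cmod_sum _)) // ler_sum // => k _.
rewrite /chain_slope cmodM cmodV cmodR gtr0_norm ?w_gt0 // mulrCA mulfV ?mulr1 //.
by rewrite gt_eqF ?w_gt0.
Qed.

Lemma chain_slope_pair_le a k :
  opnorm (chain_commutator a) <= 1 -> (k.+1 < m)%N ->
  cmod (chain_slope a k) ^+ 2 + cmod (chain_slope a k.+1) ^+ 2 <= 1.
Proof.
move=> K1 km.
have k2 : (k.+2 < n)%N by [].
have k1 : (k.+1 < n)%N := ltnW k2.
have k0 : (k < n)%N := ltnW k1.
have : vnorm (col (inord k.+1) (chain_commutator a)) ^+ 2 <= 1.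
  by rewrite expr_le1 ?vnorm_ge0 // (le_trans (vnorm_col_le_opnorm _ _)).
apply: le_trans; rewrite vnorm_sqr (bigD1 (inord k)) // (bigD1 (inord k.+2)) /=; last first.
  by rewrite -val_eqE /= !inordK // (gtn_eqF (leqW (ltnSn _))).
rewrite addrA -[X in X <= _]addr0 lerD ?sumr_ge0 // => [|i _]; last exact: sqr_ge0.
by rewrite chain_commutatorE !mxE !inordK //= !eqxx (ltn_eqF (ltnW (ltnSn _))) cmodN.
Qed.

Lemma chain_slope_sum_le a :
  opnorm (chain_commutator a) <= 1 -> \sum_(k < m) cmod (chain_slope a k) <= n%:R / 2.
Proof.
move=> K1; set c := chain_slope a.
pose s : R[i] := ((Num.sqrt n%:R)^-1)%:C%C.
pose x : 'cV[R[i]]_n := \col_i (s * (phase_pair c i).1).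
pose y : 'cV[R[i]]_n := \col_i (s * (phase_pair c i).2).
have x1 : vnorm x = 1.
  by apply: vnorm_unimodular => // i; case: (cmod_phase_pair c i).
have y1 : vnorm y = 1.
  by apply: vnorm_unimodular => // i; case: (cmod_phase_pair c i).
have Ky1 : vnorm (chain_commutator a *m y) ^+ 2 <= 1.
  by rewrite expr_le1 ?vnorm_ge0 // (le_trans (vnorm_mulmx_le_opnorm _ _)) ?y1.
have dot_le1 : cmod (\sum_i x i 0 * (chain_commutator a *m y) i 0) <= 1.
  by apply: le_trans (cmod_dot_le _ _) _; rewrite x1 expr1n; lra.
have dot_eq : \sum_i x i 0 * (chain_commutator a *m y) i 0 =
              (2 * s ^+ 2) * \sum_(k < n.-1) (cmod (c k))%:C%C.
  rewrite -phase_pair_tridiag_form chain_commutatorE; apply: eq_bigr => i _.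
  by rewrite !mxE; under eq_bigr do rewrite [y _ 0]mxE.
have s2 : s ^+ 2 = (n%:R^-1)%:C%C by rewrite -rmorphXn exprVn sqr_sqrtr ?ler0n.
move: dot_le1; rewrite dot_eq s2 -rmorph_sum -(rmorph_nat (real_complex R) 2) -!rmorphM.
rewrite cmodR ger0_norm => [le1|]; last first.
  by rewrite !mulr_ge0 ?invr_ge0 // sumr_ge0 // => k _; rewrite cmod_ge0.
have -> : \sum_(k < m) cmod (c k) = n%:R / 2 * (2 * n%:R^-1 * \sum_(k < n.-1) cmod (c k)).
  by field; rewrite gt_eqF // ltr0n.
by rewrite ler_piMr ?divr_ge0.
Qed.

Lemma chain_commutator_opnorm_le1 a (beta u : nat -> R) :
  (forall k, (k < m)%N -> cmod (chain_slope a k) <= beta k) ->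
  (forall i : 'I_n, 0 < u i) ->
  (forall i : 'I_n, \sum_j tridiag_mx n beta beta i j * u j <= u i) ->
  opnorm (chain_commutator a) <= 1.
Proof.
move=> slope_le u_gt0 Bu; apply: opnorm_le => v v1; apply: le_trans v1.
apply: (schur_test (B := tridiag_mx n beta beta) (u := fun i : 'I_n => u i)) => //.
- move=> i j; rewrite chain_commutatorE !mxE.
  have [ji|_] := eqVneq (j : nat) i.+1; first by apply: slope_le; rewrite -ltnS -ji.
  have [ij|_] := eqVneq (i : nat) j.+1; last by rewrite cmod0.
  by rewrite cmodN slope_le // -ltnS -ij.
- by move=> j; under eq_bigr do rewrite tridiag_mx_sym; exact: Bu.
Qed.

Definition chain_potential (beta : nat -> R) (j : 'I_n) : R[i] :=
  (\sum_(k < j) w k * beta k)%:C%C.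

Lemma chain_slope_potential beta k :
  (k < m)%N -> chain_slope (chain_potential beta) k = (beta k)%:C%C.
Proof.
move=> km; have kn : (k < n)%N := ltnW km.
rewrite /chain_slope /chain_potential !inordK //.
rewrite big_ord_recr /= -rmorphB addrAC subrr add0r rmorphM mulrAC divff ?mul1r //.
by rewrite (inj_eq (@complexI R)) gt_eqF ?w_gt0.
Qed.

Lemma chain_potential_ends beta : (forall k, 0 <= beta k) ->
  cmod (chain_potential beta ord0 - chain_potential beta ord_max) = \sum_(k < m) w k * beta k.
Proof.
move=> beta_ge0; rewrite /chain_potential big_ord0 sub0r cmodN cmodR ger0_norm //.
by rewrite sumr_ge0 // => k _; rewrite mulr_ge0 ?beta_ge0 ?ltW ?w_gt0.
Qed.

Lemma nclength_ge (beta u : nat -> R) :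
  (forall k, 0 <= beta k) -> (forall i : 'I_n, 0 < u i) ->
  (forall i : 'I_n, \sum_j tridiag_mx n beta beta i j * u j <= u i) ->
  ((\sum_(k < m) w k * beta k)%:E <= nclength n w)%E.
Proof.
move=> beta_ge0 u_gt0 Bu; rewrite -chain_potential_ends //.
apply: ereal_sup_ubound; exists (chain_potential beta) => //=.
apply: (chain_commutator_opnorm_le1 _ u_gt0 Bu) => k km.
by rewrite chain_slope_potential // cmodR ger0_norm.
Qed.

Lemma nclength_le (x : R) :
  (forall a, opnorm (chain_commutator a) <= 1 -> cmod (a ord0 - a ord_max) <= x) ->
  (nclength n w <= x%:E)%E.
Proof. by move=> ax; apply: ge_ereal_sup => _ [a a1 <-]; rewrite lee_fin ax. Qed.

End Chain.

Section ConstrainedMax.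
Variables (R : realType) (n : nat) (w : nat -> R).
Implicit Types P : ('I_n.-1 -> R) -> Prop.

Lemma maxf_le P (l : \bar R) : P (fun=> 0) ->
  (forall b, P b -> ((fobj w b)%:E <= l)%E) -> ((maxf w P)%:E <= l)%E.
Proof.
case: l => [r| |] P0 Pl; last by have := Pl _ P0; rewrite leeNy_eq.
  rewrite lee_fin; apply: ge_sup => [|_ [b Pb <-]]; last by rewrite -lee_fin Pl.
  by exists (fobj w (fun _ : 'I_n.-1 => 0)), (fun=> 0).
exact: leey.
Qed.

Lemma le_maxf P (M : R) b :
  (forall b, P b -> fobj w b <= M) -> P b -> fobj w b <= maxf w P.
Proof.
by move=> PM Pb; apply: ub_le_sup; [exists M => _ [b' Pb' <-]; exact: PM | exists b].
Qed.

Lemma maxf_attained P b :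
  P b -> (forall b', P b' -> fobj w b' <= fobj w b) -> maxf w P = fobj w b.
Proof.
move=> Pb bmax; apply/le_anti/andP; split; last exact: le_maxf bmax Pb.
by apply: ge_sup => [|_ [b' Pb' <-]]; [exists (fobj w b), b | exact: bmax].
Qed.

End ConstrainedMax.

Section ZeroExtension.
Variables (T : zmodType) (m : nat) (b : 'I_m -> T).

Definition zero_ext (k : nat) : T := if insub k is Some i then b i else 0.

Lemma zero_extE (i : 'I_m) : zero_ext i = b i.
Proof. by rewrite /zero_ext valK. Qed.

Lemma zero_ext_ind (P : T -> Prop) k : P 0 -> (forall i, P (b i)) -> P (zero_ext k).
Proof. by rewrite /zero_ext; case: insubP. Qed.

End ZeroExtension.

Lemma le1_of_adjacent_sums (R : realType) m (g : 'I_m -> R) :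
  (1 < m)%N -> (forall k, 0 <= g k) ->
  (forall k l : 'I_m, val l = (val k).+1 -> g k + g l <= 1) -> forall k, g k <= 1.
Proof.
move=> m_gt1 g_ge0 pair k; have [km|] := ltnP k.+1 m.
  by rewrite (le_trans _ (pair k (Ordinal km) erefl)) // lerDl.
case: k => [[|k] km] /= mk; first by move: m_gt1; rewrite ltnNge mk.
by rewrite (le_trans _ (pair (Ordinal (ltnW km)) (Ordinal km) erefl)) // lerDr.
Qed.

Section PiFractions.
Variables (R : realType) (N : nat).
Local Notation theta := (pi / N.+1%:R : R).

Lemma sin_pi_frac_ge0 k : (k <= N.+1)%N -> 0 <= sin (k%:R * theta).
Proof.
move=> kN; apply: sin_ge0_pi; rewrite mulr_ge0 ?divr_ge0 ?(ltW (@pi_gt0 R)) //=.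
by rewrite mulrA ler_pdivrMr ?ltr0n // mulrC ler_pM2l ?pi_gt0 // ler_nat.
Qed.

Lemma sin_pi_frac_gt0 k : (0 < k)%N -> (k < N.+1)%N -> 0 < sin (k%:R * theta).
Proof.
move=> k0 kN; apply: sin_gt0_pi; rewrite mulr_gt0 ?divr_gt0 ?pi_gt0 ?ltr0n //=.
by rewrite mulrA ltr_pdivrMr ?ltr0n // mulrC ltr_pM2l ?pi_gt0 // ltr_nat.
Qed.

Lemma cos_pi_frac_gt0 : (1 < N)%N -> 0 < cos theta.
Proof.
move=> N1; apply: cos_gt0_pihalf; apply/andP; split.
  by rewrite (@lt_trans _ _ 0) ?oppr_lt0 ?divr_gt0 ?pi_gt0 ?ltr0n.
by rewrite ltr_pM2l ?pi_gt0 // ltf_pV2 ?posrE ?ltr0n // ltr_nat.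
Qed.

End PiFractions.

Lemma sinSS_add_sin (R : realType) (i : nat) (t : R) :
  sin (i.+2%:R * t) + sin (i%:R * t) = 2 * cos t * sin (i.+1%:R * t).
Proof.
have -> : i.+2%:R * t = i.+1%:R * t + t by rewrite -natr1 mulrDl mul1r.
have -> : i%:R * t = i.+1%:R * t - t by rewrite -natr1 mulrDl mul1r addrK.
by rewrite sinD sinB; ring.
Qed.

Section ChainBounds.
Variables (R : realType) (m : nat) (w : nat -> R).
Hypotheses (w_gt0 : forall k, (k < m)%N -> 0 < w k) (m_gt1 : (1 < m)%N).
Local Notation n := m.+1.
Local Notation theta := (pi / n.+1%:R : R).

Lemma w_ge0 (k : 'I_m) : 0 <= w k.
Proof. exact/ltW/w_gt0. Qed.

Lemma maxf_le_nclength (P : ('I_n.-1 -> R) -> Prop) (u : nat -> R) :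
  P (fun=> 0) -> (forall i : 'I_n, 0 < u i) ->
  (forall b, P b -> let beta := zero_ext (fun k => `|b k|) in
     forall i : 'I_n, \sum_j tridiag_mx n beta beta i j * u j <= u i) ->
  ((maxf w P)%:E <= nclength n w)%E.
Proof.
move=> P0 u_gt0 Bu; apply: maxf_le => // b Pb.
have beta_ge0 k : 0 <= zero_ext (fun k => `|b k|) k.
  by apply: (zero_ext_ind (P := fun x => 0 <= x)).
have /= Bb := Bu b Pb.
apply: le_trans (nclength_ge w_gt0 beta_ge0 u_gt0 Bb).
by rewrite lee_fin ler_sum // => k _; rewrite zero_extE ler_wpM2l ?w_ge0 ?ler_norm.
Qed.

Lemma nclength_le_maxf (P : ('I_n.-1 -> R) -> Prop) (M : R) :
  (forall b, P b -> fobj w b <= M) ->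
  (forall a : 'I_n -> R[i], opnorm (chain_commutator w a) <= 1 ->
     P (fun k => cmod (chain_slope w a k))) ->
  (nclength n w <= (maxf w P)%:E)%E.
Proof.
move=> PM Pa; apply: nclength_le => a a1.
exact: le_trans (chain_telescope w_gt0 a) (le_maxf PM (Pa a a1)).
Qed.

Lemma fobj_le_abs (b : 'I_n.-1 -> R) : fobj w b <= \sum_(k < m) w k * `|b k|.
Proof. by rewrite ler_sum // => k _; rewrite ler_wpM2l ?w_ge0 ?ler_norm. Qed.

Lemma fobj_le_L2_value (b : 'I_n.-1 -> R) : \sum_(k < m) `|b k| <= n%:R / 2 ->
  fobj w b <= n%:R / 2 * \big[Num.max/0]_(k < m) w k.
Proof.
move=> b_le; set M := \big[Num.max/0]_(k < m) w k.
have M_ge0 : 0 <= M := le_trans (w_ge0 (Ordinal (ltnW m_gt1))) (le_bigmax _ _ _).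
apply: le_trans (fobj_le_abs b) _; rewrite mulrC (le_trans _ (ler_wpM2l M_ge0 b_le)) //.
by rewrite mulr_sumr ler_sum // => k _; rewrite ler_wpM2r // le_bigmax.
Qed.

Lemma L2E : L2 n w = n%:R / 2 * \big[Num.max/0]_(k < m) w k.
Proof.
have [i0 _ wi0] := eq_bigmax (x := 0) (Ordinal (ltnW m_gt1)) xpredT (fun k : 'I_m => w k)
                               isT (fun k _ => w_ge0 k).
pose b0 (k : 'I_n.-1) : R := if k == i0 then n%:R / 2 else 0.
have b0E : fobj w b0 = n%:R / 2 * \big[Num.max/0]_(k < m) w k.
  rewrite /fobj (bigD1 i0) //= big1 => [|k /negbTE k_i0]; last by rewrite /b0 k_i0 mulr0.
  by rewrite /b0 eqxx addr0 mulrC wi0.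
rewrite -b0E; apply: maxf_attained => [|b /fobj_le_L2_value]; last by rewrite b0E.
rewrite (bigD1 i0) //= big1 => [|k /negbTE k_i0]; last by rewrite /b0 k_i0 normr0.
by rewrite /b0 eqxx addr0 ger0_norm ?divr_ge0 ?ler0n.
Qed.

Lemma R2E : R2 n w = geolength n w / (2 * cos theta).
Proof.
have c_ge0 : 0 <= (2 * cos theta)^-1.
  by rewrite invr_ge0 mulr_ge0 ?ltW ?cos_pi_frac_gt0 // ltnW.
rewrite /geolength mulr_suml; apply: (maxf_attained (b := fun=> (2 * cos theta)^-1)).
  by move=> k; rewrite ger0_norm.
by move=> b b_le; rewrite ler_sum // => k _; rewrite ler_wpM2l ?w_ge0 // (le_trans (ler_norm _)).
Qed.

Lemma R1_le_nclength : ((R1 n w)%:E <= nclength n w)%E.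
Proof.
apply: (maxf_le_nclength (u := fun=> 1)) => [k l _|//|b b_pair beta i].
  by rewrite normr0 addr0 ler01.
have b_le1 := le1_of_adjacent_sums (g := fun k => `|b k|) m_gt1 (fun k => normr_ge0 _) b_pair.
have beta_le1 k : beta k <= 1 by apply: (zero_ext_ind (P := fun x => x <= 1)).
rewrite (tridiag_mx_row _ _ (fun=> 1)); case: i => [[|i] i_lt] /=; rewrite !mulr1.
  by rewrite addr0; case: ifP => _; rewrite ?beta_le1 ?ler01.
case: ifP => [i2|_]; last by rewrite add0r beta_le1.
have i1 : (i.+1 < m)%N := i2.
by rewrite addrC /beta (zero_extE _ (Ordinal (ltnW i1))) (zero_extE _ (Ordinal i1)) b_pair.
Qed.

Lemma R2_le_nclength : ((R2 n w)%:E <= nclength n w)%E.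
Proof.
set c := (2 * cos theta)^-1.
have cos_gt0 : 0 < cos theta by rewrite cos_pi_frac_gt0 // ltnW.
have c_ge0 : 0 <= c by rewrite invr_ge0 mulr_ge0 ?ltW.
apply: (maxf_le_nclength (u := fun k => sin (k.+1%:R * theta))) => [k|i|b b_le beta i].
- by rewrite normr0.
- by rewrite sin_pi_frac_gt0 // ltnS ltn_ord.
have beta_le k : beta k <= c by apply: (zero_ext_ind (P := fun x => x <= c)).
have below_le : (if i : nat is k.+1 then beta k * sin (k.+1%:R * theta) else 0) <=
                c * sin (i%:R * theta).
  case: i => [[|k] k_lt] /=; first by rewrite mul0r sin0 mulr0.
  by rewrite ler_wpM2r ?beta_le //; apply: sin_pi_frac_ge0; exact: leqW (ltnW k_lt).
have above_le : (if (i.+1 < n)%N then beta i * sin (i.+2%:R * theta) else 0) <=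
                c * sin (i.+2%:R * theta).
  have s_ge0 : 0 <= sin (i.+2%:R * theta) by apply: sin_pi_frac_ge0; exact: ltn_ord i.
  by case: ifP => _; rewrite ?ler_wpM2r ?mulr_ge0.
rewrite (tridiag_mx_row _ _ (fun k => sin (k.+1%:R * theta))).
rewrite (le_trans (lerD above_le below_le)) // -mulrDr sinSS_add_sin (mulrA c).
by rewrite /c mulVf ?mul1r // mulf_neq0 ?gt_eqF.
Qed.

Lemma nclength_le_L1 : (nclength n w <= (L1 n w)%:E)%E.
Proof.
apply: (nclength_le_maxf (M := \sum_(k < m) w k)) => [b b_pair|a a1 k l lk].
  have b2_le1 := le1_of_adjacent_sums (g := fun k => `|b k| ^+ 2) m_gt1 (fun k => sqr_ge0 _) b_pair.
  apply: le_trans (fobj_le_abs b) (ler_sum _ _) => k _.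
  by rewrite ler_piMr ?w_ge0 // -(expr_le1 (_ : 0 < 2)%N) ?b2_le1.
rewrite !ger0_norm ?cmod_ge0 // lk chain_slope_pair_le //.
by rewrite -lk ltn_ord.
Qed.

Lemma nclength_le_L2 : (nclength n w <= (L2 n w)%:E)%E.
Proof.
apply: (nclength_le_maxf (M := n%:R / 2 * \big[Num.max/0]_(k < m) w k)) => [|a a1].
  exact: fobj_le_L2_value.
rewrite (eq_bigr (fun k : 'I_m => cmod (chain_slope w a k))) => [|k _].
  exact: chain_slope_sum_le.
by rewrite ger0_norm ?cmod_ge0.
Qed.

End ChainBounds.

Theorem mainTheorem4 (R : realType) (n : nat) (w : nat -> R)
  (hn : (3 <= n)%N) (hw : forall k, (k < n.-1)%N -> 0 < w k) :
  ((Num.max (R1 n w) (R2 n w))%:E <= nclength n w)%E /\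
  (nclength n w <= (Num.min (L1 n w) (L2 n w))%:E)%E /\
  R2 n w = geolength n w / (2 * cos (pi / n.+1%:R)) /\
  L2 n w = n%:R / 2 * \big[Num.max/0]_(k < n.-1) w k.
Proof.
case: n hn hw => [|m] // m_gt1 w_gt0.
split; [|split; [|split]].
- by rewrite EFin_max ge_max R1_le_nclength // R2_le_nclength.
- by rewrite EFin_min le_min nclength_le_L1 // nclength_le_L2.
- exact: R2E.
- exact: L2E.
Qed.
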